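(* Consider a discounted Markov decision process with Borel state space $\mathcal{S}$, action sets $\mathcal{A}(s)$, transition kernel $P(\cdot\mid\alpha,s)$, bounded reward $r(\alpha,s)$, and discount factor $\beta\in(0,1)$; fix $\tau\in(0,1)$ and a stationary policy $\pi(\cdot\mid s)$. Let $\mathcal{T}^{\tau}_{\pi}$ and $\mathcal{T}^{\tau}_{*}$ be the operators on bounded functions $V:\mathcal{S}\to\mathbb{R}$ given by $$(\mathcal{T}^{\tau}_{\pi}V)(s)=Q_{\tau}\big[r(\alpha,s)+\beta V(s')\,\big|\,s\big],\ \alpha\sim\pi(\cdot\mid s),\ s'\sim P(\cdot\mid\alpha,s),$$ $$(\mathcal{T}^{\tau}_{*}V)(s)=\max_{\alpha\in\mathcal{A}(s)}Q_{\tau}\big[r(\alpha,s)+\beta V(s')\,\big|\,s\big],\ s'\sim P(\cdot\mid\alpha,s).$$ Then $\mathcal{T}^{\tau}_{\pi}$ and $\mathcal{T}^{\tau}_{*}$ admit unique fixed points $v^{\tau}_{\pi}$ and $v^{\tau}_{*}$ (among bounded functions), and for any bounded initial $V_0$ the iterations $V_{k+1}=\mathcal{T}^{\tau}_{\pi}V_k$ and $V_{k+1}=\mathcal{T}^{\tau}_{*}V_k$ converge in $\|\cdot\|_\infty$ to $v^{\tau}_{\pi}$ and $v^{\tau}_{*}$ respectively.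
   Context: For a real random variable $Z$ with CDF $F_Z$, $Q_\tau[Z]=\inf\{x\in\mathbb{R}: F_Z(x)\ge\tau\}$; $Q_\tau[\,\cdot\mid s]$ is the $\tau$-quantile of the conditional law given the current state $s$. The operators are taken to be well defined, mapping bounded (measurable) functions to bounded (measurable) functions, with the maximum over $\mathcal{A}(s)$ attained. $\|f\|_\infty=\sup_{s}|f(s)|$. *)

From HB Require Import structures.
From mathcomp Require Import all_boot all_order all_algebra.
From mathcomp Require Import all_classical all_reals all_analysis.
From mathcomp Require Import measurable_realfun kernel.
Set Implicit Arguments. Unset Strict Implicit. Unset Printing Implicit Defensive.
Import Order.TTheory GRing.Theory Num.Theory.
Local Open Scope classical_set_scope.
Local Open Scope ring_scope.

Section Defs.
Context {R : realType}.

(* tau-quantile of a law given by its CDF F : Q_tau = inf {x | F x >= tau} *)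
Definition quantile (F : R -> \bar R) (tau : R) : R :=
  inf [set x : R | (tau%:E <= F x)%E].

Definition supnorm {T : Type} (f : T -> R) : R :=
  sup [set `|f t| | t in [set: T]].

Context {d1 d2 : measure_display} {S : measurableType d1} {Act : measurableType d2}.

(* (T^tau_pi V)(s) = Q_tau[ r(a,s) + beta V(s') | s ], a ~ pi(.|s), s' ~ P(.|a,s);
   CDF: x |-> \int pi(da|s) P({s' | r(a,s) + beta V(s') <= x} | a, s) *)
Definition Tpi (P : Act -> S -> probability S R) (r : Act -> S -> R)
  (pi : S -> probability Act R) (beta tau : R) (V : S -> R) (s : S) : R :=
  quantile (fun x => \int[pi s]_(a in [set: Act])
                       P a s [set s' | (r a s + beta * V s' <= x)%R])%E tau.

Definition Qact (P : Act -> S -> probability S R) (r : Act -> S -> R)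
  (beta tau : R) (V : S -> R) (a : Act) (s : S) : R :=
  quantile (fun x => P a s [set s' | r a s + beta * V s' <= x]) tau.

(* (T^tau_* V)(s) = max_{a in A(s)} Qact ... (the max is assumed attained) *)
Definition Tstar (A : S -> set Act) (P : Act -> S -> probability S R)
  (r : Act -> S -> R) (beta tau : R) (V : S -> R) (s : S) : R :=
  sup [set Qact P r beta tau V a s | a in A s].

End Defs.

(* Both operators satisfy Blackwell's condition: if V <= W + c pointwise, then
   P(r(a,s) + beta W(s') <= x) <= P(r(a,s) + beta V(s') <= x + beta c), so every
   tau-quantile, including that of the pi-mixture over actions and hence also
   the maximum over A(s), moves by at most beta c.  Hence both operators are
   beta-contractions for the sup norm.  The Picard iterates of 0 have
   geometrically decreasing increments and converge pointwise, at a uniform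
   geometric rate, to a bounded measurable fixed point, and every orbit
   approaches it at the same rate. *)

From HB Require Import structures.
From mathcomp Require Import all_boot all_order all_algebra.
From mathcomp Require Import all_classical all_reals all_analysis.
From mathcomp Require Import measurable_realfun kernel.
From mathcomp Require Import lra ring.
Set Implicit Arguments. Unset Strict Implicit. Unset Printing Implicit Defensive.
Import Order.TTheory GRing.Theory Num.Theory.
Import numFieldNormedType.Exports.
Local Open Scope classical_set_scope.
Local Open Scope ring_scope.

Section geometric_sequences.
Context {R : realType}.

Lemma cvg_expr_mulr0 (b K : R) : 0 < b < 1 -> (fun k => b ^+ k * K) @ \oo --> 0.
Proof.
move=> /andP[b0 b1]; under eq_fun do rewrite mulrC.
by apply: cvg_geometric; rewrite ger0_norm ?ltW.
Qed.

Lemma cvg_geometric_bound (x : nat -> R) l b K : 0 < b < 1 ->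
  (forall k, `|x k - l| <= b ^+ k * K) -> x @ \oo --> l.
Proof.
move=> b01 xl; apply/subr_cvg0; have bK0 := cvg_expr_mulr0 K b01.
have NbK0 : (fun k => - (b ^+ k * K)) @ \oo --> 0 by rewrite -oppr0; apply: cvgN.
apply: (squeeze_cvgr _ NbK0 bK0); near=> k.
by have := xl k; rewrite ler_norml.
Unshelve. all: end_near. Qed.

(* x k + b^k K decreases and x k - b^k K increases, with K := M / (1 - b);
   both converge to limn x, which they enclose. *)
Lemma geometric_increments_limn (x : nat -> R) b M : 0 < b < 1 ->
  (forall k, `|x k.+1 - x k| <= b ^+ k * M) ->
  forall k, `|x k - limn x| <= b ^+ k * (M / (1 - b)).
Proof.
move=> b01 dx; have /andP[b0 b1] := b01; set K := M / (1 - b).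
have M0 : 0 <= M by have := dx 0%N; rewrite expr0 mul1r; apply: le_trans.
have K0 : 0 <= K by rewrite divr_ge0 // subr_ge0 ltW.
have bK0 k : 0 <= b ^+ k * K by rewrite mulr_ge0 // exprn_ge0 // ltW.
have telescope k : b ^+ k * M = b ^+ k * K - b ^+ k.+1 * K.
  have KM : K * (1 - b) = M by rewrite divfK // subr_eq0 gt_eqF.
  by rewrite -KM exprS; ring.
pose up k := x k + b ^+ k * K; pose lo k := x k - b ^+ k * K.
have up_dec : nonincreasing_seq up.
  by apply/nonincreasing_seqP => k; have := dx k; rewrite ler_norml telescope /up; lra.
have lo_inc : nondecreasing_seq lo.
  by apply/nondecreasing_seqP => k; have := dx k; rewrite ler_norml telescope /lo; lra.
have cvg_up : cvgn up.
  apply: nonincreasing_is_cvgn => //; exists (lo 0%N) => _ [k _ <-].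
  by apply: le_trans (lo_inc _ _ (leq0n k)) _; rewrite /lo /up; have := bK0 k; lra.
have bK_cvg := cvg_expr_mulr0 K b01.
have x_cvg : x @ \oo --> limn up.
  have -> : x = (fun k => up k - b ^+ k * K) by apply/funext => k; rewrite addrK.
  by rewrite -[limn up]subr0; apply: cvgB.
have lo_cvg : lo @ \oo --> limn up by rewrite -[limn up]subr0; apply: cvgB.
move=> k; rewrite (cvg_lim _ x_cvg) //.
have := nonincreasing_cvgn_ge up_dec cvg_up k.
have := nondecreasing_cvgn_le lo_inc (cvgP _ lo_cvg) k.
by rewrite (cvg_lim _ lo_cvg) // /lo /up ler_norml; lra.
Qed.

End geometric_sequences.

Section bounded_functions.
Context {T : Type} {R : realType}.

Lemma bounded_fun_ex_gt0 (f : T -> R) :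
  bounded_fun f -> exists2 M, 0 < M & forall t, `|f t| <= M.
Proof. by move=> /pinfty_ex_gt0[M M0 fM]; exists M => // t; exact: fM. Qed.

Lemma bounded_fun_le (f : T -> R) M : (forall t, `|f t| <= M) -> bounded_fun f.
Proof.
move=> fM; rewrite /bounded_fun /bounded_near /=; near=> M' => t _ /=.
by apply: le_trans (fM t) _; near: M'; apply: nbhs_pinfty_ge; exact: num_real.
Unshelve. all: end_near. Qed.

Lemma supnorm_le (f : T -> R) M : 0 <= M -> (forall t, `|f t| <= M) ->
  0 <= supnorm f <= M.
Proof.
move=> M0 fM; rewrite /supnorm.
have [[_ [t _ _]]|] := pselect ([set `|f t| | t in [set: T]] !=set0); last first.
  by move=> /set0P/negP/negbNE/eqP ->; rewrite sup0 lexx.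
have ub : has_ubound [set `|f t| | t in [set: T]] by exists M => _ [t' _ <-].
apply/andP; split.
  by apply: le_trans (normr_ge0 (f t)) _; apply: ub_le_sup => //; exists t.
by apply: ge_sup; [exists `|f t|; exists t | move=> _ [t' _ <-]].
Qed.

End bounded_functions.

Section blackwell_contraction.
Context d (S : measurableType d) (R : realType).

Definition bounded_measurable (V : S -> R) :=
  measurable_fun [set: S] V /\ bounded_fun V.

Variables (T : (S -> R) -> S -> R) (b : R).
Hypothesis b01 : 0 < b < 1.
Hypothesis T_bounded_measurable :
  forall V, bounded_measurable V -> bounded_measurable (T V).
Hypothesis T_shift : forall V W c, bounded_measurable V -> bounded_measurable W ->
  (forall s, V s <= W s + c) -> forall s, T V s <= T W s + b * c.

Lemma T_contraction V W c : bounded_measurable V -> bounded_measurable W ->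
  (forall s, `|V s - W s| <= c) -> forall s, `|T V s - T W s| <= b * c.
Proof.
move=> bmV bmW VW s.
have VWc t : V t <= W t + c by have := VW t; rewrite ler_norml; lra.
have WVc t : W t <= V t + c by have := VW t; rewrite ler_norml; lra.
by have := T_shift bmV bmW VWc s; have := T_shift bmW bmV WVc s; rewrite ler_norml; lra.
Qed.

Lemma iter_bounded_measurable k V :
  bounded_measurable V -> bounded_measurable (iter k T V).
Proof. by move=> bmV; elim: k => //= k; exact: T_bounded_measurable. Qed.

Lemma iter_contraction k V W c : bounded_measurable V -> bounded_measurable W ->
  (forall s, `|V s - W s| <= c) -> forall s, `|iter k T V s - iter k T W s| <= b ^+ k * c.
Proof.
move=> bmV bmW VW; elim: k => [|k IH] s /=; first by rewrite expr0 mul1r.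
by rewrite exprS -mulrA; apply: T_contraction => //; exact: iter_bounded_measurable.
Qed.

Lemma iter_geometric_cvg v w : bounded_measurable v -> T v = v ->
  bounded_measurable w ->
  exists2 c, 0 < c & forall k s, `|iter k T w s - v s| <= b ^+ k * c.
Proof.
move=> bmv Tv bmw; have [Mw Mw0 wMw] := bounded_fun_ex_gt0 bmw.2.
have [Mv Mv0 vMv] := bounded_fun_ex_gt0 bmv.2.
exists (Mw + Mv) => [|k s]; first exact: addr_gt0.
rewrite -[v s](congr1 (fun f => f s) (iter_fix k Tv)); apply: iter_contraction => // t.
exact: le_trans (ler_normB _ _) (lerD (wMw t) (vMv t)).
Qed.

Lemma picard_fixed_point : exists2 v, bounded_measurable v & T v = v.
Proof.
have bm0 : bounded_measurable (fun=> 0).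
  by split; [exact: measurable_cst | apply: (@bounded_fun_le _ _ _ 0) => t; rewrite normr0].
pose u k := iter k T (fun=> 0).
have [M _ T0M] := bounded_fun_ex_gt0 (T_bounded_measurable bm0).2.
have u_incr s k : `|u k.+1 s - u k s| <= b ^+ k * M.
  rewrite /u iterSr; apply: iter_contraction => [||t]; rewrite ?subr0 //.
  exact: T_bounded_measurable.
pose v s := limn (fun k => u k s); set K := M / (1 - b).
have u_v k s : `|u k s - v s| <= b ^+ k * K.
  exact: geometric_increments_limn b01 (u_incr s) k.
have bmu k : bounded_measurable (u k) by exact: iter_bounded_measurable.
have bmv : bounded_measurable v.
  split; last by apply: (@bounded_fun_le _ _ _ K) => s; have := u_v 0%N s;
    rewrite expr0 mul1r /u /= sub0r normrN.
  apply: (measurable_fun_cvg (h := u)) => [k|s _]; first exact: (bmu k).1.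
  exact: cvg_geometric_bound b01 (u_v ^~ s).
exists v => //; apply/funext => s.
have uS_Tv : (fun k => u k.+1 s) @ \oo --> T v s.
  apply: (cvg_geometric_bound (K := b * K) b01) => k.
  by rewrite /u /= mulrCA; exact: T_contraction (bmu k) bmv (u_v k) s.
have uS_v : (fun k => u k.+1 s) @ \oo --> v s.
  by apply: (cvg_geometric_bound (K := b * K) b01) => k; rewrite mulrA -exprSr.
exact: cvg_unique uS_Tv uS_v.
Qed.

Theorem blackwell_fixed_point : exists v : S -> R,
  [/\ measurable_fun [set: S] v, bounded_fun v, T v = v,
      (forall w : S -> R, measurable_fun [set: S] w -> bounded_fun w -> T w = w -> w = v) &
      (forall V0 : S -> R, measurable_fun [set: S] V0 -> bounded_fun V0 ->
         (fun k => supnorm (iter k T V0 \- v)) @ \oo --> 0)].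
Proof.
have [v [mv bv] Tv] := picard_fixed_point.
exists v; split => // [w mw bw Tw | V0 mV0 bV0].
  apply/funext => s; have [c _ wv] := iter_geometric_cvg (conj mv bv) Tv (conj mw bw).
  have w_v : (fun=> w s) @ \oo --> v s.
    by apply: (cvg_geometric_bound (K := c) b01) => k; have := wv k s; rewrite iter_fix.
  exact: cvg_unique (cvg_cst (w s)) w_v.
have [c c0 V0v] := iter_geometric_cvg (conj mv bv) Tv (conj mV0 bV0).
apply: (cvg_geometric_bound (K := c) b01) => k; rewrite subr0.
have /andP[b0 _] := b01.
have /andP[sup0 supc] := supnorm_le (mulr_ge0 (exprn_ge0 k (ltW b0)) (ltW c0)) (V0v k).
by rewrite ger0_norm.
Qed.

End blackwell_contraction.

Section real_extrema.
Context {R : realType}.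

Lemma quantile_le_shift (FV FW : R -> \bar R) tau e m M : 0 < tau ->
  (forall x, x < m -> FV x = 0%E) -> (tau%:E <= FW M)%E ->
  (forall x, (FW x <= FV (x + e)%R)%E) -> quantile FV tau <= quantile FW tau + e.
Proof.
move=> tau0 FV0 FWM FWV; rewrite /quantile -lerBlDr.
have lbV : has_lbound [set x | (tau%:E <= FV x)%E].
  exists m => x /= tauFV; rewrite leNgt; apply/negP => /FV0 FVx0.
  by move: tauFV; rewrite FVx0 lee_fin; lra.
apply: lb_le_inf => [|y /= tauFWy]; first by exists M.
by rewrite lerBlDr; apply: (ge_inf lbV); exact: le_trans tauFWy (FWV y).
Qed.

Lemma sup_attained (E : set R) m : E m -> ubound E m -> sup E = m.
Proof.
move=> Em Em_ub; apply/eqP; rewrite eq_le ge_sup //; last by exists m.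
by apply: ub_le_sup => //; exists m.
Qed.

End real_extrema.

(* The integral of a non-negative function is a supremum over simple minorants,
   so monotonicity needs no measurability. *)
Lemma ge0_le_integralT d (X : measurableType d) (R : realType)
    (mu : {measure set X -> \bar R}) (f g : X -> \bar R) :
  (forall x, (0 <= f x)%E) -> (forall x, (f x <= g x)%E) ->
  (\int[mu]_(x in [set: X]) f x <= \int[mu]_(x in [set: X]) g x)%E.
Proof.
move=> f0 fg; rewrite !ge0_integralTE // => [|x]; last exact: le_trans (f0 x) (fg x).
by apply: ereal_sup_le => _ [h hf <-]; exists h => // x; exact: le_trans (hf x) (fg x).
Qed.

Section quantile_operators.
Context d1 d2 (S : measurableType d1) (Act : measurableType d2) (R : realType).
Variables (P : Act -> S -> probability S R) (r : Act -> S -> R) (beta tau Mr : R).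
Hypotheses (beta_gt0 : 0 < beta) (tau_gt0 : 0 < tau) (tau_le1 : tau <= 1).
Hypothesis r_le : forall a s, `|r a s| <= Mr.

Lemma level_set0 (V : S -> R) MV a s x : (forall t, `|V t| <= MV) ->
  x < - (Mr + beta * MV) -> [set t | r a s + beta * V t <= x] = set0.
Proof.
move=> V_le xlt; apply/seteqP; split => // t /= ht.
have := r_le a s; have := V_le t; rewrite !ler_norml => /andP[Vlo _] /andP[rlo _].
by have := ler_wpM2l (ltW beta_gt0) Vlo; rewrite mulrN; lra.
Qed.

Lemma level_setT (V : S -> R) MV a s : (forall t, `|V t| <= MV) ->
  [set t | r a s + beta * V t <= Mr + beta * MV] = setT.
Proof.
move=> V_le; apply/seteqP; split => // t _ /=.
have := r_le a s; have := V_le t; rewrite !ler_norml => /andP[_ Vhi] /andP[_ rhi].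
by have := ler_wpM2l (ltW beta_gt0) Vhi; lra.
Qed.

Lemma measurable_level_set (V : S -> R) a s x :
  measurable_fun [set: S] V -> measurable [set t | r a s + beta * V t <= x].
Proof.
move=> mV; rewrite -[X in measurable X]setTI.
apply: (measurable_fun_le (f := fun t => r a s + beta * V t) (g := cst x)) => //.
by apply: measurable_funD => //; exact: measurable_funM.
Qed.

Lemma le_measure_level_set (V W : S -> R) c a s x :
  bounded_measurable V -> bounded_measurable W -> (forall t, V t <= W t + c) ->
  (P a s [set t | (r a s + beta * W t <= x)%R] <=
   P a s [set t | (r a s + beta * V t <= x + beta * c)%R])%E.
Proof.
move=> [mV _] [mW _] VWc; apply: le_measure; rewrite ?inE; try exact: measurable_level_set.
move=> t /=; have := ler_wpM2l (ltW beta_gt0) (VWc t).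
by rewrite mulrDr; lra.
Qed.

Lemma Qact_shift (V W : S -> R) c a s :
  bounded_measurable V -> bounded_measurable W -> (forall t, V t <= W t + c) ->
  Qact P r beta tau V a s <= Qact P r beta tau W a s + beta * c.
Proof.
move=> bmV bmW VWc; have [MV _ V_le] := bounded_fun_ex_gt0 bmV.2.
have [MW _ W_le] := bounded_fun_ex_gt0 bmW.2.
apply: (quantile_le_shift (m := - (Mr + beta * MV)) (M := Mr + beta * MW)) => //.
- by move=> x xlt; rewrite (level_set0 a s V_le xlt) measure0.
- by rewrite (level_setT a s W_le) probability_setT lee_fin.
- by move=> x; exact: le_measure_level_set.
Qed.

Lemma Tpi_shift (pi : S -> probability Act R) (V W : S -> R) c :
  bounded_measurable V -> bounded_measurable W -> (forall t, V t <= W t + c) ->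
  forall s, Tpi P r pi beta tau V s <= Tpi P r pi beta tau W s + beta * c.
Proof.
move=> bmV bmW VWc s; have [MV _ V_le] := bounded_fun_ex_gt0 bmV.2.
have [MW _ W_le] := bounded_fun_ex_gt0 bmW.2.
apply: (quantile_le_shift (m := - (Mr + beta * MV)) (M := Mr + beta * MW)) => //.
- move=> x xlt; under eq_integral => a _ do rewrite (level_set0 a s V_le xlt) measure0.
  exact: integral0.
- under eq_integral => a _ do rewrite (level_setT a s W_le) probability_setT.
  rewrite integral_cst // mul1e [X in (_ <= X)%E](_ : _ = 1%E) ?lee_fin //.
  exact: probability_setT.
- move=> x; apply: ge0_le_integralT => a; first exact: measure_ge0.
  exact: le_measure_level_set.
Qed.

Lemma Tstar_shift (A : S -> set Act) :
  (forall V : S -> R, measurable_fun [set: S] V -> bounded_fun V ->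
     forall s, exists2 a, A s a &
       forall b, A s b -> Qact P r beta tau V b s <= Qact P r beta tau V a s) ->
  forall (V W : S -> R) c, bounded_measurable V -> bounded_measurable W ->
  (forall t, V t <= W t + c) ->
  forall s, Tstar A P r beta tau V s <= Tstar A P r beta tau W s + beta * c.
Proof.
move=> Qact_max V W c [mV bV] [mW bW] VWc s.
have Tstar_max (U : S -> R) : measurable_fun [set: S] U -> bounded_fun U ->
    exists2 a, A s a & Tstar A P r beta tau U s = Qact P r beta tau U a s /\
      forall b, A s b -> Qact P r beta tau U b s <= Qact P r beta tau U a s.
  move=> mU bU; have [a Aa a_max] := Qact_max U mU bU s; exists a => //; split => //.
  by apply: sup_attained => [|_ [b Ab <-]]; [exists a | exact: a_max].
have [aV AaV [-> _]] := Tstar_max V mV bV; have [aW _ [-> aW_max]] := Tstar_max W mW bW.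
apply: le_trans (Qact_shift aV s (conj mV bV) (conj mW bW) VWc) _.
by rewrite lerD2r; exact: aW_max.
Qed.

End quantile_operators.

Theorem corollary1 (d1 d2 : measure_display) (S : measurableType d1)
  (Act : measurableType d2) (R : realType)
  (A : S -> set Act) (P : Act -> S -> probability S R)
  (r : Act -> S -> R) (beta tau : R) (pi : S -> probability Act R) :
  (* transition kernel and policy are measurable kernels *)
  (forall B : set S, measurable B ->
     measurable_fun [set: Act * S] ((fun p : Act * S => P p.1 p.2 B) : Act * S -> \bar R)) ->
  (forall B : set Act, measurable B ->
     measurable_fun [set: S] ((fun s => pi s B) : S -> \bar R)) ->
  (* bounded measurable reward *)
  measurable_fun [set: Act * S] (fun p : Act * S => r p.1 p.2) ->
  bounded_fun (fun p : Act * S => r p.1 p.2) ->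
  0 < beta < 1 -> 0 < tau < 1 ->
  (* the operators are well defined on bounded measurable functions *)
  (forall V : S -> R, measurable_fun [set: S] V -> bounded_fun V ->
     measurable_fun [set: S] (Tpi P r pi beta tau V) /\
     bounded_fun (Tpi P r pi beta tau V)) ->
  (forall V : S -> R, measurable_fun [set: S] V -> bounded_fun V ->
     measurable_fun [set: S] (Tstar A P r beta tau V) /\
     bounded_fun (Tstar A P r beta tau V)) ->
  (* the maximum over A(s) is attained *)
  (forall V : S -> R, measurable_fun [set: S] V -> bounded_fun V ->
     forall s, exists2 a, A s a &
       forall b, A s b -> Qact P r beta tau V b s <= Qact P r beta tau V a s) ->
  (exists v : S -> R,
     [/\ measurable_fun [set: S] v, bounded_fun v,
         Tpi P r pi beta tau v = v,
         (forall w : S -> R, measurable_fun [set: S] w -> bounded_fun w ->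
            Tpi P r pi beta tau w = w -> w = v) &
         (forall V0 : S -> R, measurable_fun [set: S] V0 -> bounded_fun V0 ->
            (fun k : nat => supnorm (iter k (Tpi P r pi beta tau) V0 \- v))
              @ \oo --> 0%R)])
  /\
  (exists v : S -> R,
     [/\ measurable_fun [set: S] v, bounded_fun v,
         Tstar A P r beta tau v = v,
         (forall w : S -> R, measurable_fun [set: S] w -> bounded_fun w ->
            Tstar A P r beta tau w = w -> w = v) &
         (forall V0 : S -> R, measurable_fun [set: S] V0 -> bounded_fun V0 ->
            (fun k : nat => supnorm (iter k (Tstar A P r beta tau) V0 \- v))
              @ \oo --> 0%R)]).
Proof.
move=> _ _ _ r_bounded beta01 /andP[tau_gt0 /ltW tau_le1] Tpi_bm Tstar_bm Qact_max.
have [Mr _ r_le] := bounded_fun_ex_gt0 r_bounded.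
have {}r_le a s : `|r a s| <= Mr := r_le (a, s).
have beta_gt0 : 0 < beta by case/andP: beta01.
split; apply: (blackwell_fixed_point beta01).
- by move=> V [mV bV]; exact: Tpi_bm.
- by move=> V W c; apply: Tpi_shift.
- by move=> V [mV bV]; exact: Tstar_bm.
- by move=> V W c; apply: Tstar_shift.
Qed.
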